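(* Let $I,J\in\mathbb Z$ with $4I^3\ne J^2$, and let \[ g(a,c,d)=(I-12d+3ac)(96d+3ac-2I)^2-(J+27c^2+27a^2d)^2 . \] Then the affine surface $Y_{I,J}\subset\mathbb A^3$ defined by $g(a,c,d)=0$ contains no rational lines, i.e. there is no set $\{(\alpha,\gamma,\delta)+t(A,C,D): t\in\mathbb Q\}$ with $(\alpha,\gamma,\delta)\in\mathbb Q^3$ and $(A,C,D)\in\mathbb Q^3\setminus\{\mathbf 0\}$ contained in the zero set of $g$. *)

From mathcomp Require Import all_boot all_order all_algebra.
Set Implicit Arguments. Unset Strict Implicit. Unset Printing Implicit Defensive.
Import Order.TTheory GRing.Theory Num.Theory.
Local Open Scope ring_scope.

Definition g_IJ (I J : int) (a c d : rat) : rat :=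
  (I%:~R - 12 * d + 3 * a * c) * (96 * d + 3 * a * c - 2 * I%:~R) ^+ 2
  - (J%:~R + 27 * c ^+ 2 + 27 * a ^+ 2 * d) ^+ 2.

Definition line_in_Y (I J : int) (al ga de A C D : rat) : Prop :=
  forall t : rat, g_IJ I J (al + t * A) (ga + t * C) (de + t * D) = 0.

(* On a line, g restricts to v u^2 - w^2 with v, u quadratic and w cubic in the
   parameter t, so the line lies on Y_{I,J} iff the seven coefficients of this
   sextic vanish.  If a is constant along the line, the t^4 and t^3 coefficients
   -729 C^4 and -110592 D^3 kill the direction.  Otherwise reparametrize so that
   a = t.  The t^6 coefficient puts (C, D) on the cusp C^3 = 27 D^2, i.e.
   (C, D) = (3 s^2, s^3).  For s <> 0 the t^5, t^4, t^3 coefficients force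
   c = 2rs - 8s^3 + 3s^2 t, d = rs^2 - 3s^4 + s^3 t and (I, J) = (r^2, -2r^3);
   for s = 0 they force c = d = 0, and the constant term is 4I^3 - J^2.  Either
   way 4I^3 = J^2. *)

From mathcomp Require Import all_boot all_order all_algebra.
From mathcomp Require Import ring lra.
Set Implicit Arguments. Unset Strict Implicit. Unset Printing Implicit Defensive.
Import Order.TTheory GRing.Theory Num.Theory.
Local Open Scope ring_scope.

Lemma expf_eq0_eq0 (D : idomainType) (z : D) n : z ^+ n.+1 = 0 -> z = 0.
Proof. by move/eqP; rewrite expf_eq0 => /eqP. Qed.

Lemma cusp_param (F : fieldType) (C D : F) :
  C != 0 -> C ^+ 3 = 27 * D ^+ 2 -> exists s, C = 3 * s ^+ 2 /\ D = s ^+ 3.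
Proof.
move=> C0 hC; exists (3 * D / C); split.
  by apply: (mulIf (expf_neq0 2 C0)); rewrite /= -exprS hC; field.
have -> : (3 * D / C) ^+ 3 = 27 * D ^+ 2 * D / C ^+ 3 by field.
by rewrite -hC mulrAC divff ?mul1r // expf_neq0.
Qed.

Section LinesOnY.
Variable R : realFieldType.

Definition g_xy (x y a c d : R) : R :=
  (x - 12 * d + 3 * a * c) * (96 * d + 3 * a * c - 2 * x) ^+ 2
  - (y + 27 * c ^+ 2 + 27 * a ^+ 2 * d) ^+ 2.

Lemma poly_deg6_coef_eq0 (c0 c1 c2 c3 c4 c5 c6 : R) :
  (forall t, c0 + c1 * t + c2 * t ^+ 2 + c3 * t ^+ 3 + c4 * t ^+ 4
             + c5 * t ^+ 5 + c6 * t ^+ 6 = 0) ->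
  [/\ c0 = 0, c1 = 0, c2 = 0, c3 = 0 & [/\ c4 = 0, c5 = 0 & c6 = 0]].
Proof.
move=> H.
have := H 0; have := H 1; have := H 2; have := H 3.
have := H (-1); have := H (-2); have := H (-3).
rewrite !expr0n /=.
by do 7 move=> ?; do !split; lra.
Qed.

Lemma cubic_square_coef (v0 v1 v2 u0 u1 u2 w0 w1 w2 w3 : R) :
  (forall t, (v0 + v1 * t + v2 * t ^+ 2) * (u0 + u1 * t + u2 * t ^+ 2) ^+ 2
             - (w0 + w1 * t + w2 * t ^+ 2 + w3 * t ^+ 3) ^+ 2 = 0) ->
  [/\ v0 * u0 ^+ 2 = w0 ^+ 2,
      2 * v0 * u0 * u1 + v1 * u0 ^+ 2 = 2 * w0 * w1,
      v0 * (u1 ^+ 2 + 2 * u0 * u2) + 2 * v1 * u0 * u1 + v2 * u0 ^+ 2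
        = w1 ^+ 2 + 2 * w0 * w2,
      2 * v0 * u1 * u2 + v1 * (u1 ^+ 2 + 2 * u0 * u2) + 2 * v2 * u0 * u1
        = 2 * (w0 * w3 + w1 * w2) &
    [/\ v0 * u2 ^+ 2 + 2 * v1 * u1 * u2 + v2 * (u1 ^+ 2 + 2 * u0 * u2)
          = w2 ^+ 2 + 2 * w1 * w3,
        v1 * u2 ^+ 2 + 2 * v2 * u1 * u2 = 2 * w2 * w3 &
        v2 * u2 ^+ 2 = w3 ^+ 2]].
Proof.
move=> H.
have [t|c0 c1 c2 c3 [c4 c5 c6]] := @poly_deg6_coef_eq0
  (v0 * u0 ^+ 2 - w0 ^+ 2)
  (2 * v0 * u0 * u1 + v1 * u0 ^+ 2 - 2 * w0 * w1)
  (v0 * (u1 ^+ 2 + 2 * u0 * u2) + 2 * v1 * u0 * u1 + v2 * u0 ^+ 2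
     - (w1 ^+ 2 + 2 * w0 * w2))
  (2 * v0 * u1 * u2 + v1 * (u1 ^+ 2 + 2 * u0 * u2) + 2 * v2 * u0 * u1
     - 2 * (w0 * w3 + w1 * w2))
  (v0 * u2 ^+ 2 + 2 * v1 * u1 * u2 + v2 * (u1 ^+ 2 + 2 * u0 * u2)
     - (w2 ^+ 2 + 2 * w1 * w3))
  (v1 * u2 ^+ 2 + 2 * v2 * u1 * u2 - 2 * w2 * w3)
  (v2 * u2 ^+ 2 - w3 ^+ 2).
  by rewrite -[RHS](H t); ring.
by do !split; apply: subr0_eq.
Qed.

Lemma line_const_a_dir0 (x y a p q C D : R) :
  (forall t, g_xy x y a (p + t * C) (q + t * D) = 0) -> C = 0 /\ D = 0.
Proof.
move=> H.
have [t|_ _ _ c3 [c4 _ _]] := @cubic_square_coef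
  (x - 12 * q + 3 * a * p) (3 * a * C - 12 * D) 0
  (96 * q + 3 * a * p - 2 * x) (96 * D + 3 * a * C) 0
  (y + 27 * p ^+ 2 + 27 * a ^+ 2 * q) (54 * p * C + 27 * a ^+ 2 * D)
  (27 * C ^+ 2) 0.
  by rewrite -[RHS](H t) /g_xy; ring.
have /expf_eq0_eq0 C0 : C ^+ 4 = 0 by lra.
subst C; split=> //.
by apply: (@expf_eq0_eq0 _ _ 2); lra.
Qed.

Lemma line_graph_disc0 (x y p q C D : R) :
  (forall t, g_xy x y t (p + t * C) (q + t * D) = 0) -> 4 * x ^+ 3 = y ^+ 2.
Proof.
move=> H.
have [t|c0 _ _ c3 [c4 c5 c6]] := @cubic_square_coef
  (x - 12 * q) (3 * p - 12 * D) (3 * C)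
  (96 * q - 2 * x) (96 * D + 3 * p) (3 * C)
  (y + 27 * p ^+ 2) (54 * p * C) (27 * C ^+ 2 + 27 * q) (27 * D).
  by rewrite -[RHS](H t) /g_xy; ring.
have cusp : C ^+ 3 = 27 * D ^+ 2 by lra.
have [C0|C_neq0] := eqVneq C 0.
  subst C; have /expf_eq0_eq0 D0 : D ^+ 2 = 0 by lra.
  subst D; have /expf_eq0_eq0 q0 : q ^+ 2 = 0 by lra.
  subst q; have /expf_eq0_eq0 p0 : p ^+ 3 = 0 by lra.
  subst p; lra.
have [s [Cs Ds]] := cusp_param C_neq0 cusp; subst C D.
have s_neq0 : s != 0 by apply: contra_neq C_neq0 => ->; rewrite expr0n mulr0.
have [r Ep] : exists r, p = 2 * r * s - 8 * s ^+ 3.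
  by exists ((p + 8 * s ^+ 3) / (2 * s)); field.
subst p.
have Eq : q = r * s ^+ 2 - 3 * s ^+ 4.
  by apply: (mulfI (expf_neq0 3 s_neq0)); lra.
subst q.
have Ex : x = r ^+ 2 by apply: (mulfI (expf_neq0 4 s_neq0)); lra.
subst x.
have Ey : y = - 2 * r ^+ 3 by apply: (mulfI (expf_neq0 3 s_neq0)); lra.
by rewrite Ey; ring.
Qed.

End LinesOnY.

Theorem lemma6p1 (I J : int) (hIJ : 4 * I ^+ 3 != J ^+ 2) :
  ~ (exists al ga de A C D : rat,
        (A, C, D) != (0, 0, 0) /\ line_in_Y I J al ga de A C D).
Proof.
move=> [al [ga [de [A [C [D [ACD_neq0 H]]]]]]].
have [A0|A_neq0] := eqVneq A 0.
  subst A; have [C0 D0] : C = 0 /\ D = 0.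
    apply: (@line_const_a_dir0 _ I%:~R J%:~R al ga de) => t.
    by have := H t; rewrite mulr0 addr0.
  by subst C D; rewrite eqxx in ACD_neq0.
move/negP: hIJ; apply; rewrite -(eqr_int rat) rmorphM !rmorphXn /=; apply/eqP.
apply: (@line_graph_disc0 _ _ _ (ga - al * C / A) (de - al * D / A) (C / A) (D / A)).
move=> s; have := H ((s - al) / A).
have -> : al + (s - al) / A * A = s by field.
have -> : ga + (s - al) / A * C = ga - al * C / A + s * (C / A) by field.
have -> : de + (s - al) / A * D = de - al * D / A + s * (D / A) by field.
by [].
Qed.
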